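(* Let $N\ge 1$ and let $f:\{0,1\}^N\to\{-1,1\}$ be a Boolean function. Let $0\le\epsilon$ and suppose a quantum query (black-box) algorithm computes $f$ with error probability at most $\epsilon$ using $T$ queries. Then $$T\;\ge\;\frac{1-2\sqrt{\epsilon}}{2}\,\rho_f\,N\;=\;\frac{1-2\sqrt{\epsilon}}{2}\,\bar S_f .$$
   Context: Quantum query model: the input $x=(x_0,\dots,x_{N-1})\in\{0,1\}^N$ is accessible only through an oracle. The algorithm works in a Hilbert space with basis states $|i\rangle_I|a\rangle_A|w\rangle_W|r\rangle_R$ (index register $i\in\{0,\dots,N-1\}$, one-bit answer register $a$, a working register $w$ of fixed size, and a one-bit result register $r$). An algorithm with $T$ queries is a sequence $U_0, O_x, U_1, O_x,\dots,O_x,U_T$ of unitaries, where the $U_j$ are arbitrary unitaries independent of $x$ and the query gate is $O_x:|i\rangle|a\rangle|w\rangle|r\rangle\mapsto|i\rangle|a\oplus x_i\rangle|w\rangle|r\rangle$. It starts from a fixed basis state, and at the end the result register is measured. It computes $f$ with error probability at most $\epsilon$ if for every $x\in\{0,1\}^N$ the measured result equals $f(x)$ with probability at least $1-\epsilon$. For $x\in\{0,1\}^N$, $e_i$ is the string with a single $1$ in position $i$ and $+$ is bitwise XOR. The influence of variable $i$ is $\mathrm{Inf}_i(f)=\Pr_x[f(x)\ne f(x+e_i)]$ with $x$ uniform in $\{0,1\}^N$; the average influence is $\rho_f=\frac1N\sum_{i=0}^{N-1}\mathrm{Inf}_i(f)$. The sensitivity of $f$ at $x$ is $S_f(x)=|\{i: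 f(x)\ne f(x+e_i)\}|$, and the average sensitivity is $\bar S_f=E_x[S_f(x)]$ for uniform $x$ (so $\bar S_f=\rho_f N$). *)

From HB Require Import structures.
From mathcomp Require Import all_boot all_order all_algebra.
From mathcomp Require Import reals complex.
Set Implicit Arguments. Unset Strict Implicit. Unset Printing Implicit Defensive.
Import Order.TTheory GRing.Theory Num.Theory.
Local Open Scope ring_scope.

Definition input (N : nat) := {ffun 'I_N -> bool}.

Definition flip (N : nat) (x : input N) (i : 'I_N) : input N :=
  [ffun j => x j (+) (j == i)].

(* Basis states |i>_I |a>_A |w>_W |r>_R. *)
Definition basis (N : nat) (W : finType) := ('I_N * bool * W * bool)%type.

Section Quantum.
Variables (R : realType) (N : nat) (W : finType).
Local Notation B := (basis N W).
Local Notation C := (R[i]).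

Definition qstate := B -> C.
Definition qop := B -> B -> C.

Definition qapply (U : qop) (v : qstate) : qstate :=
  fun s => \sum_(t : B) U s t * v t.

(* U^* U = 1 (on a finite-dimensional space this is unitarity) *)
Definition unitary (U : qop) : Prop :=
  forall s s' : B, \sum_(t : B) conjc (U t s) * U t s' = (s == s')%:R.

Definition basis_state (s0 : B) : qstate := fun s => (s == s0)%:R.

Definition oracle_map (x : input N) (s : B) : B :=
  let: (i, a, w, r) := s in (i, a (+) x i, w, r).

Definition oracle (x : input N) : qop :=
  fun s t => (s == oracle_map x t)%:R.

Record algorithm (T : nat) := Algorithm {
  alg_U : 'I_T.+1 -> qop;
  alg_unitary : forall j, unitary (alg_U j);
  alg_start : B
}.

Fixpoint run (T : nat) (A : algorithm T) (x : input N) (k : nat) : qstate :=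
  match k with
  | 0 => qapply (alg_U A (inord 0)) (basis_state (alg_start A))
  | k'.+1 => qapply (alg_U A (inord k)) (qapply (oracle x) (run A x k'))
  end.

Definition final_state (T : nat) (A : algorithm T) (x : input N) : qstate :=
  run A x T.

Definition sqnorm (z : C) : R := (complex.Re z) ^+ 2 + (complex.Im z) ^+ 2.

Definition prob_result (psi : qstate) (b : bool) : R :=
  \sum_(s : B | s.2 == b) sqnorm (psi s).

(* Boolean functions with values in {-1,1}; result bit r encodes (-1)^r,
   i.e. r = true  <->  value -1. *)
Definition bit_of_pm1 (v : int) : bool := v == -1.

Definition computes_with_error (T : nat) (A : algorithm T)
    (f : input N -> int) (eps : R) : Prop :=
  forall x : input N, 1 - eps <= prob_result (final_state A x) (bit_of_pm1 (f x)).

End Quantum.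

Section Influence.
Variables (R : realType) (N : nat).

Definition influence (f : input N -> int) (i : 'I_N) : R :=
  (#|[pred x : input N | f x != f (flip x i)]|)%:R / (#|{: input N}|)%:R.

Definition avg_influence (f : input N -> int) : R :=
  (\sum_(i < N) influence f i) / N%:R.

Definition sensitivity (f : input N -> int) (x : input N) : nat :=
  #|[pred i : 'I_N | f x != f (flip x i)]|.

Definition avg_sensitivity (f : input N -> int) : R :=
  (\sum_(x : input N) (sensitivity f x)%:R) / (#|{: input N}|)%:R.

End Influence.

From HB Require Import structures.
From mathcomp Require Import all_boot all_order all_algebra.
From mathcomp Require Import reals complex.
From mathcomp Require Import ring lra.
Set Implicit Arguments. Unset Strict Implicit. Unset Printing Implicit Defensive.
Import Order.TTheory GRing.Theory Num.Theory.
Local Open Scope ring_scope.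

(* Hybrid argument.  Let [Phi] be the sum of [||psi_x - psi_(x + e_j)||^2] over
   all inputs [x] and indices [j], where [psi_x] is the state of the algorithm on
   input [x].  Before the first query [Phi = 0], and the unitaries [U_k] do not
   change it.  The oracles [O_x] and [O_(x + e_j)] differ only on amplitudes with
   index register [j], so a query raises the [(x, j)] term by at most twice the
   weight of [psi_x] and of [psi_(x + e_j)] on index [j]; summed over [j] this is
   [4 * 2^N] per query.  At the end, each sensitive pair [f x <> f (x + e_j)] is a
   pair of unit vectors putting weight [>= 1 - eps] on opposite result bits, at
   squared distance [>= 2 - 4 sqrt eps].  Hence
   [(2 - 4 sqrt eps) * sum_x S_f(x) <= 4 * T * 2^N]. *)

Section ComplexSqnorm.
Variable R : realType.
Implicit Types (z w : R[i]) (l : R).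

Definition dotc z w : R := complex.Re z * complex.Re w + complex.Im z * complex.Im w.

Lemma dotcC : commutative dotc.
Proof. by move=> z w; rewrite /dotc mulrC [complex.Im z * _]mulrC. Qed.

Lemma sqnorm_ge0 z : 0 <= sqnorm z.
Proof. by rewrite /sqnorm addr_ge0 ?sqr_ge0. Qed.

Lemma sqnormE z : ((sqnorm z)%:C)%C = conjc z * z.
Proof.
case: z => a b; apply/eqP; rewrite /sqnorm eq_complex /=.
by apply/andP; split; apply/eqP; ring.
Qed.

Lemma sqnorm_bool (b : bool) : sqnorm (b%:R : R[i]) = b%:R.
Proof. by case: b; rewrite /sqnorm /= ?expr0n ?expr1n /= ?addr0. Qed.

Lemma sqnormB z w : sqnorm (z - w) = sqnorm z + sqnorm w - 2 * dotc z w.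
Proof. by case: z => a b; case: w => c d; rewrite /sqnorm /dotc /=; ring. Qed.

Lemma sqnormB_le z w : sqnorm (z - w) <= 2 * sqnorm z + 2 * sqnorm w.
Proof.
rewrite sqnormB -subr_ge0.
have -> : 2 * sqnorm z + 2 * sqnorm w - (sqnorm z + sqnorm w - 2 * dotc z w)
          = sqnorm (z + w) by case: z => a b; case: w => c d; rewrite /sqnorm /dotc /=; ring.
exact: sqnorm_ge0.
Qed.

Lemma dotc_le_AMGM l z w : 0 < l -> 2 * dotc z w <= l * sqnorm z + l^-1 * sqnorm w.
Proof.
move=> l_gt0; rewrite -subr_ge0.
have -> : l * sqnorm z + l^-1 * sqnorm w - 2 * dotc z w
          = l^-1 * sqnorm ((l%:C)%C * z - w).
  case: z => a b; case: w => c d; rewrite /sqnorm /dotc /=.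
  by field; rewrite gt_eqF.
by rewrite mulr_ge0 ?sqnorm_ge0 // invr_ge0 ltW.
Qed.

(* Choose [l = sqrt eps], or [l = X] when [eps <= 0]. *)
Lemma le_sqrt_of_scaled_AMGM (X u v eps : R) :
    u <= 1 -> 0 <= v <= eps ->
    (forall l, 0 < l -> 2 * X <= l * u + l^-1 * v) -> X <= Num.sqrt eps.
Proof.
move=> u_le1 /andP[v_ge0 v_le] amgm.
have [eps_le0 | eps_gt0] := leP eps 0.
  have v0 : v = 0 by apply/le_anti; rewrite v_ge0 (le_trans v_le eps_le0).
  rewrite (ler0_sqrtr eps_le0) leNgt; apply/negP => X_gt0.
  have := amgm X X_gt0; rewrite v0 mulr0 addr0.
  have : X * u <= X by rewrite ler_piMr // ltW.
  lra.
have sq_gt0 : 0 < Num.sqrt eps by rewrite sqrtr_gt0.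
have := amgm _ sq_gt0.
have : Num.sqrt eps * u <= Num.sqrt eps by rewrite ler_piMr // ltW.
have : (Num.sqrt eps)^-1 * v <= Num.sqrt eps.
  by rewrite ler_pdivrMl // -expr2 sqr_sqrtr ?(ltW eps_gt0).
lra.
Qed.

Lemma sum_dotc_le_sqrt (I : finType) (P : pred I) (a b : I -> R[i]) (eps : R) :
    \sum_(s | P s) sqnorm (a s) <= 1 -> \sum_(s | P s) sqnorm (b s) <= eps ->
  \sum_(s | P s) dotc (a s) (b s) <= Num.sqrt eps.
Proof.
move=> a_le1 b_le.
apply: (le_sqrt_of_scaled_AMGM (v := \sum_(s | P s) sqnorm (b s)) a_le1).
  by rewrite b_le andbT sumr_ge0 // => s _; apply: sqnorm_ge0.
move=> l l_gt0; rewrite !mulr_sumr -big_split /=.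
by apply: ler_sum => s _; exact: (dotc_le_AMGM _ _ l_gt0).
Qed.

End ComplexSqnorm.

Section States.
Variables (R : realType) (N : nat) (W : finType).
Local Notation B := (basis N W).
Local Notation qstate := (qstate R N W).
Implicit Types (v w psi phi : qstate) (U : qop R N W) (x : input N) (s : B).

Definition qsqnorm v : R := \sum_s sqnorm (v s).

Lemma qsqnorm_ge0 v : 0 <= qsqnorm v.
Proof. by apply: sumr_ge0 => s _; apply: sqnorm_ge0. Qed.

Lemma qsqnorm_unitary U v : unitary U -> qsqnorm (qapply U v) = qsqnorm v.
Proof.
move=> U_unitary; apply: (@complexI R); rewrite /qsqnorm !rmorph_sum /=.
under eq_bigr => s _ do rewrite sqnormE /qapply rmorph_sum mulr_suml.
under eq_bigr => s _ do under eq_bigr => t _ do rewrite mulr_sumr.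
rewrite exchange_big; apply: eq_bigr => t _; rewrite exchange_big /=.
transitivity (\sum_t' (t == t')%:R * (conjc (v t) * v t')).
  apply: eq_bigr => t' _; rewrite -(U_unitary t t') mulr_suml.
  by apply: eq_bigr => s _; rewrite rmorphM /=; ring.
rewrite (bigD1 t) //= eqxx mul1r big1 ?addr0 ?sqnormE // => t' t'_neq.
by rewrite eq_sym (negPf t'_neq) mul0r.
Qed.

Lemma qsqnormB_unitary U v w :
  unitary U -> qsqnorm (qapply U v \- qapply U w) = qsqnorm (v \- w).
Proof.
move=> U_unitary; rewrite -(qsqnorm_unitary (v \- w) U_unitary).
apply: eq_bigr => s _; rewrite /qapply /= -sumrB; congr sqnorm.
by apply: eq_bigr => t _; rewrite mulrBr.
Qed.

Lemma qsqnorm_basis_state s0 : qsqnorm (basis_state R s0) = 1.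
Proof.
rewrite /qsqnorm (bigD1 s0) //= /basis_state eqxx sqnorm_bool big1 ?addr0 //.
by move=> s /negPf->; rewrite sqnorm_bool.
Qed.

Lemma prob_result_ge0 psi b : 0 <= prob_result psi b.
Proof. by apply: sumr_ge0 => s _; apply: sqnorm_ge0. Qed.

Lemma qsqnorm_prob_result psi b : qsqnorm psi = prob_result psi b + prob_result psi (~~ b).
Proof.
rewrite /qsqnorm (bigID (fun s : B => s.2 == b)) /=; congr (_ + _).
by apply: eq_bigl => s; case: (s.2); case: b.
Qed.

Lemma qsqnormB_distinguish psi phi b eps :
    qsqnorm psi = 1 -> qsqnorm phi = 1 ->
    1 - eps <= prob_result psi b -> 1 - eps <= prob_result phi (~~ b) ->
  2 - 4 * Num.sqrt eps <= qsqnorm (psi \- phi).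
Proof.
move=> psi1 phi1 psi_b phi_nb.
have expand : qsqnorm (psi \- phi) = 2 - 2 * \sum_s dotc (psi s) (phi s).
  rewrite /qsqnorm; under eq_bigr => s _ do rewrite /= sqnormB.
  by rewrite sumrB big_split /= -mulr_sumr -/(qsqnorm psi) -/(qsqnorm phi) psi1 phi1.
have := qsqnorm_prob_result psi b; have := qsqnorm_prob_result phi b.
have := prob_result_ge0 psi (~~ b); have := prob_result_ge0 phi b.
move=> psi_nb_ge0 phi_b_ge0 split_phi split_psi.
have dot_b : \sum_(s | s.2 == b) dotc (psi s) (phi s) <= Num.sqrt eps.
  apply: sum_dotc_le_sqrt.
    by change (prob_result psi b <= 1); lra.
  by change (prob_result phi b <= eps); lra.
have dot_nb : \sum_(s | s.2 != b) dotc (psi s) (phi s) <= Num.sqrt eps.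
  rewrite (eq_bigl (fun s : B => s.2 == ~~ b)) => [|s]; last by case: (s.2); case: (b).
  under eq_bigr => s _ do rewrite dotcC.
  apply: sum_dotc_le_sqrt.
    by change (prob_result phi (~~ b) <= 1); lra.
  by change (prob_result psi (~~ b) <= eps); lra.
rewrite expand (bigID (fun s : B => s.2 == b)) /=; lra.
Qed.

Lemma oracle_mapK x : involutive (@oracle_map N W x).
Proof. by case=> [[[i a] w] r] /=; rewrite -addbA addbb addbF. Qed.

Lemma oracle_map_inj x : injective (@oracle_map N W x).
Proof. exact: inv_inj (oracle_mapK x). Qed.

Lemma oracle_map_index x s : (oracle_map x s).1.1.1 = s.1.1.1.
Proof. by case: s => [[[i a] w] r]. Qed.

Lemma oracle_map_flip x j s : s.1.1.1 != j -> oracle_map (flip x j) s = oracle_map x s.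
Proof. by case: s => [[[i a] w] r] /= /negPf i_neq_j; rewrite ffunE i_neq_j addbF. Qed.

Lemma qapply_oracle x v s : qapply (oracle R x) v s = v (oracle_map x s).
Proof.
rewrite /qapply (bigD1 (oracle_map x s)) //= /oracle oracle_mapK eqxx mul1r.
rewrite big1 ?addr0 // => t t_neq; case: eqP => [s_eq | _]; last by rewrite mul0r.
by move: t_neq; rewrite s_eq oracle_mapK eqxx.
Qed.

(* [s.1.1.1] is the index register of the basis state [s]. *)
Definition query_weight v (j : 'I_N) : R := \sum_(s | s.1.1.1 == j) sqnorm (v s).

Lemma sum_query_weight v : \sum_j query_weight v j = qsqnorm v.
Proof. by rewrite /qsqnorm (partition_big (fun s : B => s.1.1.1) predT). Qed.

Lemma query_weight_oracle x v j : query_weight (qapply (oracle R x) v) j = query_weight v j.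
Proof.
rewrite [RHS](reindex_inj (@oracle_map_inj x)) /=.
by apply: eq_big => [s | s _]; rewrite ?oracle_map_index ?qapply_oracle.
Qed.

Lemma qsqnorm_oracle x v : qsqnorm (qapply (oracle R x) v) = qsqnorm v.
Proof.
by rewrite -!sum_query_weight; apply: eq_bigr => j _; rewrite query_weight_oracle.
Qed.

(* Off index [j] the two oracles agree; on index [j] use [|a - b|^2 <= 2|a|^2 + 2|b|^2]. *)
Lemma qsqnormB_oracle_flip x j v w :
  qsqnorm (qapply (oracle R x) v \- qapply (oracle R (flip x j)) w)
    <= qsqnorm (v \- w) + 2 * (query_weight v j + query_weight w j).
Proof.
rewrite -(qsqnorm_oracle x (v \- w)) /qsqnorm.
rewrite (bigID (fun s : B => s.1.1.1 == j)).
rewrite [X in _ <= X + _](bigID (fun s : B => s.1.1.1 == j)) /=.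
have off_j : \sum_(s | s.1.1.1 != j)
    sqnorm (qapply (oracle R x) v s - qapply (oracle R (flip x j)) w s)
  = \sum_(s | s.1.1.1 != j) sqnorm (qapply (oracle R x) (v \- w) s).
  by apply: eq_bigr => s s_neq; rewrite !qapply_oracle oracle_map_flip.
have on_j : \sum_(s | s.1.1.1 == j)
    sqnorm (qapply (oracle R x) v s - qapply (oracle R (flip x j)) w s)
  <= 2 * (query_weight v j + query_weight w j).
  rewrite -(query_weight_oracle x v) -(query_weight_oracle (flip x j) w).
  by rewrite mulrDr !mulr_sumr -big_split; apply: ler_sum => s _; apply: sqnormB_le.
have : 0 <= \sum_(s | s.1.1.1 == j) sqnorm (qapply (oracle R x) (v \- w) s).
  by apply: sumr_ge0 => s _; apply: sqnorm_ge0.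
lra.
Qed.

End States.

Lemma flipK (N : nat) (j : 'I_N) : involutive (fun x : input N => flip x j).
Proof. by move=> x; apply/ffunP => i; rewrite !ffunE -addbA addbb addbF. Qed.

Lemma bit_of_pm1_flip (u v : int) :
  u = 1 \/ u = -1 -> v = 1 \/ v = -1 -> u != v -> bit_of_pm1 v = ~~ bit_of_pm1 u.
Proof. by case=> ->; case=> ->. Qed.

Section FlipSpread.
Variables (R : realType) (N : nat) (W : finType).
Local Notation qstate := (qstate R N W).
Implicit Types (v : input N -> qstate) (U : qop R N W).

Definition flip_spread v : R := \sum_x \sum_j qsqnorm (v x \- v (flip x j)).

Definition total_sqnorm v : R := \sum_x qsqnorm (v x).

Lemma flip_spread_unitary U v :
  unitary U -> flip_spread (fun x => qapply U (v x)) = flip_spread v.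
Proof.
by move=> U_unitary; apply: eq_bigr => x _; apply: eq_bigr => j _; apply: qsqnormB_unitary.
Qed.

Lemma flip_spread_oracle v :
  flip_spread (fun x => qapply (oracle R x) (v x)) <= flip_spread v + 4 * total_sqnorm v.
Proof.
apply: (@le_trans _ _ (\sum_x \sum_j (qsqnorm (v x \- v (flip x j))
    + 2 * (query_weight (v x) j + query_weight (v (flip x j)) j)))).
  by apply: ler_sum => x _; apply: ler_sum => j _; apply: qsqnormB_oracle_flip.
have weight_x : \sum_x \sum_j query_weight (v x) j = total_sqnorm v.
  by apply: eq_bigr => x _; apply: sum_query_weight.
have weight_flip : \sum_x \sum_j query_weight (v (flip x j)) j = total_sqnorm v.
  rewrite -weight_x exchange_big [RHS]exchange_big /=; apply: eq_bigr => j _.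
  by rewrite [RHS](reindex_inj (inv_inj (@flipK N j))).
have -> : \sum_x \sum_j (qsqnorm (v x \- v (flip x j))
      + 2 * (query_weight (v x) j + query_weight (v (flip x j)) j))
    = flip_spread v + 2 * (\sum_x \sum_j query_weight (v x) j)
      + 2 * (\sum_x \sum_j query_weight (v (flip x j)) j).
  rewrite /flip_spread !mulr_sumr -!big_split; apply: eq_bigr => x _.
  by rewrite !mulr_sumr -!big_split; apply: eq_bigr => j _; rewrite mulrDr addrA.
rewrite weight_x weight_flip; lra.
Qed.

Variables (T : nat) (A : algorithm R N W T).

Lemma qsqnorm_run x k : qsqnorm (run A x k) = 1.
Proof.
elim: k => [|k IH] /=; (rewrite qsqnorm_unitary; last exact: alg_unitary).
  exact: qsqnorm_basis_state.
by rewrite qsqnorm_oracle.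
Qed.

Lemma flip_spread_run k : flip_spread (run A ^~ k) <= 4 * k%:R * #|{: input N}|%:R.
Proof.
elim: k => [|k IH].
  rewrite mulr0 mul0r /flip_spread big1 // => x _; rewrite big1 // => j _.
  by rewrite /qsqnorm big1 // => s _; rewrite /= subrr /sqnorm /= expr0n /= addr0.
have -> : flip_spread (run A ^~ k.+1)
          = flip_spread (fun x => qapply (oracle R x) (run A x k)).
  exact: flip_spread_unitary (alg_unitary A _).
apply: le_trans (flip_spread_oracle _) _.
have -> : total_sqnorm (run A ^~ k) = #|{: input N}|%:R.
  by rewrite /total_sqnorm (eq_bigr (fun=> 1)) ?sumr_const // => x _; apply: qsqnorm_run.
by rewrite -[k.+1]addn1 natrD mulrDr mulr1 mulrDl lerD2r.
Qed.

Lemma sum_sensitivity_le (f : input N -> int) (eps : R) :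
    (forall x, f x = 1 \/ f x = -1) -> computes_with_error A f eps ->
  (2 - 4 * Num.sqrt eps) * \sum_x (sensitivity f x)%:R
    <= 4 * T%:R * #|{: input N}|%:R.
Proof.
move=> f_pm1 A_f; apply: le_trans (flip_spread_run T).
rewrite mulr_sumr; apply: ler_sum => x _.
rewrite /sensitivity -sum1_card natr_sum mulr_sumr big_mkcond /=.
apply: ler_sum => j _; rewrite inE; case: ifP => [f_sens | _]; last exact: qsqnorm_ge0.
rewrite mulr1; apply: (qsqnormB_distinguish (b := bit_of_pm1 (f x))).
- exact: qsqnorm_run.
- exact: qsqnorm_run.
- exact: A_f.
- by rewrite -(bit_of_pm1_flip (f_pm1 x) (f_pm1 (flip x j)) f_sens); apply: A_f.
Qed.

End FlipSpread.

Section Influence.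
Variables (R : realType) (N : nat) (f : input N -> int).

Lemma sum_influence : \sum_i influence R f i = avg_sensitivity R f.
Proof.
rewrite /influence /avg_sensitivity -mulr_suml -!natr_sum; congr (_%:R / _).
have card_sum (T : finType) (P : pred T) : #|P| = \sum_t (P t : nat).
  by rewrite -sum1_card big_mkcond; apply: eq_bigr => t _; rewrite unfold_in; case: (P t).
under eq_bigr => i _ do rewrite card_sum.
by rewrite exchange_big; apply: eq_bigr => x _; rewrite /sensitivity card_sum.
Qed.

Lemma avg_influence_mulN : avg_influence R f * N%:R = avg_sensitivity R f.
Proof.
rewrite /avg_influence -sum_influence.
have [N0 | N_gt0] := posnP N.
  rewrite [in N%:R]N0 mulr0 big1 // => i _.
  by have := ltn_ord i; rewrite [X in (_ < X)%N]N0.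
by rewrite divfK // pnatr_eq0 -lt0n.
Qed.

End Influence.

Theorem theorem3 (R : realType) (N : nat) (hN : (1 <= N)%N) (W : finType)
    (f : input N -> int) (hf : forall x, f x = 1 \/ f x = -1)
    (eps : R) (heps : 0 <= eps) (T : nat) (A : algorithm R N W T) :
  computes_with_error A f eps ->
  (1 - 2 * Num.sqrt eps) / 2 * avg_influence R f * N%:R <= T%:R /\
  (1 - 2 * Num.sqrt eps) / 2 * avg_influence R f * N%:R
    = (1 - 2 * Num.sqrt eps) / 2 * avg_sensitivity R f.
Proof.
move=> A_f; rewrite -mulrA avg_influence_mulN; split=> //.
have inputs_gt0 : 0 < #|{: input N}|%:R :> R.
  by rewrite ltr0n; apply/card_gt0P; exists [ffun=> false].
have := sum_sensitivity_le hf A_f.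
rewrite /avg_sensitivity mulrA ler_pdivrMr //; lra.
Qed.
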